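(* Let $k\ge d$ and $(\mathbf x_1,\dots,\mathbf x_k)\sim\mathrm{VS}_{D_{\mathcal X}}^k$, with $\mathbf X\in\mathbb R^{k\times d}$ the matrix with rows $\mathbf x_i^\top$. Given $\mathbf X$, choose a subset $S\subseteq\{1,\dots,k\}$ with $|S|=d$ by standard volume sampling, i.e. with probability $\det(\mathbf X_S)^2/\det(\mathbf X^\top\mathbf X)$, and list the points $\{\mathbf x_i\}_{i\in S}$ in uniformly random order as $(\mathbf x_{i_1},\dots,\mathbf x_{i_d})$. Then $(\mathbf x_{i_1},\dots,\mathbf x_{i_d})\sim\mathrm{VS}_{D_{\mathcal X}}^d$.
   Context: $D_{\mathcal X}$ is a probability distribution on $\mathbb R^d$ with $\mathbb E\|\mathbf x\|^2<\infty$ and invertible $\boldsymbol\Sigma_{D_{\mathcal X}}:=\mathbb E[\mathbf x\mathbf x^\top]$; $D_{\mathcal X}^k$ is the law of $k$ i.i.d. draws. For $k\ge d$, $\mathrm{VS}_{D_{\mathcal X}}^k(A)=\mathbb E_{D_{\mathcal X}^k}[\mathbf 1_A\det(\sum_{i=1}^k\mathbf x_i\mathbf x_i^\top)]/\big(d!\binom kd\det(\boldsymbol\Sigma_{D_{\mathcal X}})\big)$. $\mathbf X_S$ is the $d\times d$ submatrix of rows indexed by $S$. (Under $\mathrm{VS}_{D_{\mathcal X}}^k$, $\det(\mathbf X^\top\mathbf X)>0$ almost surely.) *)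

From HB Require Import structures.
From mathcomp Require Import all_boot all_order all_algebra all_fingroup.
From mathcomp Require Import all_classical all_reals all_analysis.
Set Implicit Arguments. Unset Strict Implicit. Unset Printing Implicit Defensive.
Import Order.TTheory GRing.Theory Num.Theory.
Local Open Scope classical_set_scope.
Local Open Scope ring_scope.

(* Points of R^d are d-tuples of reals (product sigma-algebra on tuples);
   a sample of k points is a k-tuple of such points. *)
Notation vec R d := (d.-tuple R).
Notation sample R d k := (k.-tuple (d.-tuple R)).

Definition datamx {R : realType} {d k : nat} (X : sample R d k) : 'M[R]_(k, d) :=
  \matrix_(i < k, j < d) tnth (tnth X i) j.

Definition second_moment {R : realType} {d : nat}
  (D : probability (vec R d) R) : 'M[R]_d :=
  \matrix_(a < d, b < d) fine (\int[D]_x (tnth x a * tnth x b)%:E)%E.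

(* Dk is the law D^k of k i.i.d. draws from D: it is the product measure,
   characterised on measurable rectangles. *)
Definition is_iid_law {R : realType} {d k : nat}
  (D : probability (vec R d) R) (Dk : probability (sample R d k) R) : Prop :=
  forall A : 'I_k -> set (vec R d), (forall i, measurable (A i)) ->
    Dk [set X | forall i, A i (tnth X i)] = (\prod_(i < k) D (A i))%E.

Definition VS {R : realType} {d k : nat} (D : probability (vec R d) R)
  (Dk : probability (sample R d k) R) (A : set (sample R d k)) : \bar R :=
  ((\int[Dk]_(X in A) (\det ((datamx X)^T *m datamx X))%:E) *
   (((d`! * 'C(k, d))%:R * \det (second_moment D))^-1)%:E)%E.

(* Increasing maps 'I_d -> 'I_k, i.e. d-subsets S of {1..k} listed in order. *)
Definition increasing {d k : nat} (f : {ffun 'I_d -> 'I_k}) : bool :=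
  [forall i : 'I_d, forall j : 'I_d, (i < j)%N ==> (f i < f j)%N].

Definition submx_rows {R : realType} {d k : nat} (X : sample R d k)
  (f : {ffun 'I_d -> 'I_k}) : 'M[R]_d :=
  \matrix_(i < d, j < d) datamx X (f i) j.

(* Given X, probability that the output (x_{i_1},...,x_{i_d}) lies in B:
   pick S with probability det(X_S)^2/det(X^T X), then a uniformly random
   ordering sigma of S (probability 1/d! each). *)
Definition select_prob {R : realType} {d k : nat} (X : sample R d k)
  (B : set (sample R d d)) : R :=
  \sum_(f : {ffun 'I_d -> 'I_k} | increasing f)
     (\det (submx_rows X f) ^+ 2 / \det ((datamx X)^T *m datamx X)) *
     (d`!%:R^-1 *
      \sum_(s : 'S_d) \1_B [tuple tnth X (f (s i)) | i < d]).

(* With g X = det (X^T X), the law VS^k has density c * g with respect to D^k.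
   Integrating the selection probability against it cancels the denominator g
   (when g X = 0 every minor det X_S vanishes as well), leaving a sum over the
   C(k, d) subsets S and the d! orderings of E_{D^k}[det(X_S)^2 1_B] / d!.
   Selecting d distinct coordinates pushes the i.i.d. law D^k forward to D^d,
   so all these terms equal E_{D^d}[det(Y)^2 1_B] / d!, and C(k, d) c is
   exactly the normalising constant of VS^d. *)

From HB Require Import structures.
From mathcomp Require Import all_boot all_order all_algebra all_fingroup.
From mathcomp Require Import all_classical all_reals all_analysis.
From mathcomp Require Import measurable_realfun.
Set Implicit Arguments. Unset Strict Implicit. Unset Printing Implicit Defensive.
Import Order.TTheory GRing.Theory Num.Theory.
Local Open Scope classical_set_scope.
Local Open Scope ring_scope.

Section integral_density.
Local Open Scope ereal_scope.
Context d (T : measurableType d) (R : realType).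
Variables (mu nu : {measure set T -> \bar R}) (g : T -> R).
Hypotheses (g_ge0 : forall x, (0 <= g x)%R) (mg : measurable_fun setT g).
Hypothesis nu_density : forall A, measurable A -> nu A = \int[mu]_(x in A) (g x)%:E.

Import HBNNSimple.

Lemma integral_density_nnsfun (h : {nnsfun T >-> R}) E : measurable E ->
  \int[mu]_(x in E) ((h x)%:E * (g x)%:E) = \int[nu]_(x in E) (h x)%:E.
Proof.
move=> mE; have mgE : measurable_fun E (EFin \o g).
  exact/measurable_EFinP/measurable_funTS.
have indic_ge0 r x : 0 <= (r * \1_(h @^-1` [set r]) x)%:E.
  by rewrite EFinM; exact: nnfun_muleindic_ge0.
transitivity (\int[mu]_(x in E) (\sum_(r \in range h)
    (r * \1_(h @^-1` [set r]) x)%:E * (g x)%:E)).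
  apply: eq_integral => x _.
  by rewrite -ge0_mule_fsuml // fsumEFin // -(fimfunE _ x).
transitivity (\int[nu]_(x in E)
    (\sum_(r \in range h) (r * \1_(h @^-1` [set r]) x)%:E)); last first.
  by apply: eq_integral => x _; rewrite /= fimfunE -fsumEFin.
have m_indic r : measurable_fun E (fun x => (r * \1_(h @^-1` [set r]) x)%:E).
  by apply: (measurable_comp measurableT) => //; exact: measurable_funM.
rewrite ge0_integral_fsum //; last 2 first.
- by move=> r; apply: emeasurable_funM.
- by move=> r x _; rewrite mule_ge0 // lee_fin.
rewrite ge0_integral_fsum //.
apply: eq_fsbigr => r; rewrite inE => -[x _ <-].
under [RHS]eq_integral do rewrite EFinM.
rewrite integralZl_indic_nnsfun //.
under eq_integral do rewrite EFinM -muleA.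
rewrite ge0_integralZl //; first last.
- by rewrite lee_fin.
- by move=> y _; rewrite mule_ge0 ?lee_fin.
- by apply: emeasurable_funM => //; exact/measurable_EFinP.
congr (_ * _); under eq_integral do rewrite muleC.
rewrite (eq_integral ((EFin \o g) \_ (h @^-1` [set h x]))); last first.
  by move=> y _; rewrite epatch_indic.
by rewrite -integral_mkcondr -nu_density // integral_indic // setIC.
Qed.

Lemma integral_density f E : (forall x, 0 <= f x) ->
    measurable E -> measurable_fun E f ->
  \int[mu]_(x in E) (f x * (g x)%:E) = \int[nu]_(x in E) f x.
Proof.
move=> f0 mE mf; pose h := nnsfun_approx mE mf.
have h_ge0 n x : 0 <= (h n x)%:E by rewrite lee_fin.
have h_nd x a b : (a <= b)%N -> (h a x)%:E <= (h b x)%:E.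
  by move=> ab; rewrite lee_fin; exact/lefP/nd_nnsfun_approx.
have mh n : measurable_fun E (EFin \o h n).
  by apply/measurable_EFinP/measurable_funTS; exact/measurable_funP.
have h_cvg x : E x -> (EFin \o h n) x @[n --> \oo] --> f x.
  by move=> Ex; exact: cvg_nnsfun_approx.
transitivity (lim (\int[mu]_(x in E) ((h n x)%:E * (g x)%:E) @[n --> \oo])).
  rewrite -monotone_convergence //; first last.
  - by move=> x _ a b ab; apply: lee_wpmul2r; [rewrite lee_fin | exact: h_nd].
  - by move=> n x _; rewrite mule_ge0 ?lee_fin.
  - move=> n; apply: emeasurable_funM; first exact: mh.
    exact/measurable_EFinP/measurable_funTS.
  apply: eq_integral => x /[!inE] Ex; apply/esym/cvg_lim => //.
  by apply: cvgeZr => //; exact: h_cvg.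
have int_h n : \int[mu]_(x in E) ((h n x)%:E * (g x)%:E) =
    \int[nu]_(x in E) (h n x)%:E by exact: integral_density_nnsfun.
under eq_fun do rewrite int_h.
rewrite -monotone_convergence //; last by move=> x _ a b; exact: h_nd.
by apply: eq_integral => x /[!inE] Ex; apply/cvg_lim => //; exact: h_cvg.
Qed.

End integral_density.

(* No sign is assumed on [c]: if [c < 0], positivity of [nu] forces [g = 0]
   almost everywhere, and both sides vanish. *)
Lemma integral_scaled_density d (T : measurableType d) (R : realType)
    (mu nu : {measure set T -> \bar R}) (g : T -> R) (c : R) :
    (forall x, 0 <= g x) -> measurable_fun setT g ->
    (forall A, measurable A -> nu A = (\int[mu]_(x in A) (g x)%:E * c%:E)%E) ->
  forall f : T -> \bar R, (forall x, 0 <= f x)%E -> measurable_fun setT f ->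
  (\int[nu]_x f x = \int[mu]_x (f x * (g x)%:E) * c%:E)%E.
Proof.
move=> g0 mg nuE f f0 mf.
have mgE : measurable_fun setT (EFin \o g) by exact/measurable_EFinP.
have int_g_ge0 A : (0 <= \int[mu]_(x in A) (g x)%:E)%E.
  by apply: integral_ge0 => x _; rewrite lee_fin.
have [c0|c0] := lerP 0 c.
  have nu_cg A : measurable A -> nu A = (\int[mu]_(x in A) (c * g x)%:E)%E.
    move=> mA; rewrite nuE // muleC -ge0_integralZl_EFin //.
      by move=> x _; rewrite lee_fin.
    exact: measurable_funTS.
  have cg0 x : 0 <= c * g x by rewrite mulr_ge0.
  have mcg : measurable_fun setT (fun x => c * g x) by exact: measurable_funM.
  rewrite -(integral_density cg0 mcg nu_cg f0 measurableT mf).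
  rewrite -ge0_integralZr //; last 2 first.
  - exact: emeasurable_funM.
  - by move=> x _; rewrite mule_ge0 // lee_fin.
  by apply: eq_integral => x _; rewrite -muleA -EFinM mulrC.
have g_null A : measurable A -> (\int[mu]_(x in A) (g x)%:E = 0)%E.
  have int_g_le0 : (\int[mu]_x (g x)%:E <= 0)%E.
    have : (0 <= \int[mu]_x (g x)%:E * c%:E)%E by rewrite -nuE.
    by rewrite nmule_lge0 // lte_fin.
  move=> mA; apply/eqP; rewrite eq_le int_g_ge0 andbT.
  apply: le_trans int_g_le0; apply: ge0_subset_integral => //.
  by move=> x _; rewrite lee_fin.
have nu0 A : measurable A -> nu A = (\int[mu]_(x in A) (cst 0 x)%:E)%E.
  by move=> mA; rewrite nuE // g_null // mul0e integral0.
have mzero_g A : measurable A -> mzero A = (\int[mu]_(x in A) (g x)%:E)%E.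
  by move=> mA; rewrite g_null.
rewrite -(integral_density (fun=> lexx 0) (measurable_cst (0 : R)) nu0 f0
  measurableT mf).
rewrite (integral_density g0 mg mzero_g f0 measurableT mf) integral_measure_zero.
by rewrite mul0e; apply: integral0_eq => x _; rewrite mule0.
Qed.

Section gram_determinant.
Variable R : realFieldType.

Lemma tr_mul_self_eq0 n (u : 'cV[R]_n) : u^T *m u = 0 -> u = 0.
Proof.
move=> /(congr1 (fun A : 'M[R]_1 => A 0 0)); rewrite !mxE => uu0.
apply/matrixP => i j; rewrite (ord1 j) [RHS]mxE; apply/eqP; rewrite -sqrf_eq0.
apply/eqP; apply: (psumr_eq0P (P := xpredT) (F := fun l => u l 0 ^+ 2)) => //.
  by move=> l _; exact: sqr_ge0.
by rewrite -[RHS]uu0; apply: eq_bigr => l _; rewrite mxE expr2.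
Qed.

Lemma det_gram_ge0 k d (M : 'M[R]_(k, d)) : 0 <= \det (M^T *m M).
Proof.
elim: d M => [|d IH] M; first by rewrite det_mx00.
suff gram_row (u : 'cV[R]_k) (N : 'M[R]_(k, d)) :
    0 <= \det ((row_mx u N)^T *m row_mx u N).
  by have := gram_row (@lsubmx _ k 1 d M) (@rsubmx _ k 1 d M); rewrite hsubmxK.
set a := (u^T *m u) 0 0.
have uu : u^T *m u = a%:M by exact: mx11_scalar.
have [a0|a_neq0] := eqVneq a 0.
  have -> : u = 0 by apply: tr_mul_self_eq0; rewrite uu a0 raddf0.
  by rewrite tr_row_mx mul_col_row trmx0 !mul0mx mulmx0 det_lblock det0 mul0r.
(* Clearing the first column against the others leaves the Gram determinant
   unchanged and splits it as [a * \det (N'^T *m N')]. *)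
pose U : 'M[R]_(1, d) := - (a^-1 *: (u^T *m N)).
pose N' := u *m U + N.
have clear_col : row_mx u N *m block_mx 1 U 0 1 = row_mx u N'.
  by rewrite mul_row_block !mulmx1 !mulmx0 addr0.
have det_clear : \det (block_mx (1 : 'M[R]_1) U 0 (1 : 'M[R]_d)) = 1.
  by rewrite det_ublock !det1 mulr1.
have <- : \det ((row_mx u N')^T *m row_mx u N') =
          \det ((row_mx u N)^T *m row_mx u N).
  rewrite -clear_col trmx_mul !mulmxA -(mulmxA (_^T) (_^T)) !det_mulmx.
  by rewrite det_tr det_clear mul1r mulr1.
have uN' : u^T *m N' = 0.
  rewrite /N' mulmxDr mulmxA uu mul_scalar_mx /U scalerN scalerA.
  by rewrite mulfV // scale1r addNr.
rewrite tr_row_mx mul_col_row uN' det_lblock det_mx11 mulr_ge0 //.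
by rewrite /a mxE sumr_ge0 // => i _; rewrite mxE -expr2 sqr_ge0.
Qed.

Lemma det_rowsub_eq0 k d (M : 'M[R]_(k, d)) (f : 'I_d -> 'I_k) :
  \det (M^T *m M) = 0 -> \det (rowsub f M) = 0.
Proof.
move/eqP/det0P => [v v_neq0 vMM].
have Mv0 : M *m v^T = 0.
  apply: tr_mul_self_eq0.
  by rewrite trmx_mul trmxK mulmxA -(mulmxA v) vMM !mul0mx.
apply/eqP; rewrite -det_tr; apply/det0P; exists v => //.
apply: trmx_inj; rewrite trmx_mul !trmxK mul_rowsub_mx Mv0.
by apply/matrixP => i j; rewrite !mxE.
Qed.

End gram_determinant.

Lemma sqr_det_rowsub_perm (R : comNzRingType) k d (M : 'M[R]_(k, d))
    (f : 'I_d -> 'I_k) (s : 'S_d) :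
  \det (rowsub (f \o s) M) ^+ 2 = \det (rowsub f M) ^+ 2.
Proof.
rewrite rowsub_comp -row_permEsub row_permE det_mulmx det_perm exprMn.
by rewrite -exprM mulnC exprM sqrrN !expr1n mul1r.
Qed.

Section measurable_matrix.
Variable R : realType.

Lemma measurable_inv : measurable_fun setT (@GRing.inv R).
Proof.
rewrite -(setUv [set (0 : R)]).
apply/(measurable_funU _ (measurable_set1 0) (measurableC (measurable_set1 0))).
split; first exact: measurable_fun_set1.
apply: open_continuous_measurable_fun.
  exact/closed_openC/accessible_closed_set1/hausdorff_accessible/Rhausdorff.
by move=> x; rewrite inE /= => x0; apply: inv_continuous; exact/eqP.
Qed.

Lemma measurable_det d (T : measurableType d) n (M : T -> 'M[R]_n) :
  (forall i j, measurable_fun setT (fun x => M x i j)) ->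
  measurable_fun setT (fun x => \det (M x)).
Proof.
move=> mM; rewrite /determinant; apply: measurable_sum => s.
apply: measurable_funM; first exact: measurable_cst.
by apply: measurable_prod => i _; exact: mM.
Qed.

Lemma measurable_datamx d k (i : 'I_k) (j : 'I_d) :
  measurable_fun setT (fun X : sample R d k => datamx X i j).
Proof.
under eq_fun do rewrite mxE.
exact: (measurableT_comp (measurable_tnth j) (measurable_tnth i)).
Qed.

Lemma measurable_det_gram d k :
  measurable_fun setT (fun X : sample R d k => \det ((datamx X)^T *m datamx X)).
Proof.
apply: measurable_det => a b; under eq_fun do rewrite mxE.
apply: measurable_sum => i; under eq_fun do rewrite mxE.
by apply: measurable_funM; exact: measurable_datamx.
Qed.

End measurable_matrix.

Definition subsample (T : Type) n m (h : 'I_n -> 'I_m) (X : m.-tuple T) :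
  n.-tuple T := [tuple tnth X (h i) | i < n].

Lemma measurable_subsample d (T : measurableType d) n m (h : 'I_n -> 'I_m) :
  measurable_fun setT (@subsample T n m h).
Proof.
apply/measurable_fun_tnthP => i.
rewrite (_ : _ \o _ = fun X => tnth X (h i)); first exact: measurable_tnth.
by apply/funext => X /=; rewrite tnth_mktuple.
Qed.

HB.instance Definition _ d (T : measurableType d) n m (h : 'I_n -> 'I_m) :=
  isMeasurableFun.Build _ _ _ _ (@subsample T n m h) (measurable_subsample h).

Lemma datamx_subsample (R : realType) d k n (h : 'I_n -> 'I_k)
    (X : sample R d k) :
  datamx (subsample h X) = rowsub h (datamx X).
Proof. by apply/matrixP => i j; rewrite !mxE tnth_mktuple. Qed.

Lemma submx_rowsE (R : realType) d k (X : sample R d k)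
    (f : {ffun 'I_d -> 'I_k}) :
  submx_rows X f = rowsub f (datamx X).
Proof. by apply/matrixP => i j; rewrite !mxE. Qed.

Section tuple_rect.
Context d (T : measurableType d) (n : nat).

Definition tuple_rect (A : 'I_n -> set T) : set (n.-tuple T) :=
  [set t | forall i, A i (tnth t i)].

Definition measurable_rects : set (set (n.-tuple T)) :=
  [set tuple_rect A | A in [set A | forall i, measurable (A i)]].

Lemma measurable_tuple_rect A : (forall i, measurable (A i)) ->
  measurable (tuple_rect A).
Proof.
move=> mA; have -> : tuple_rect A =
    \big[setI/setT]_(i <- enum 'I_n) ((fun t => tnth t i) @^-1` A i).
  rewrite -bigcap_seq; apply/seteqP; split => t /= At i.
    by move=> _; exact: At.
  by apply: At; rewrite /= mem_enum.
apply: bigsetI_measurable => i _.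
by rewrite -[X in measurable X]setTI; exact: measurable_tnth.
Qed.

Lemma measurable_rects_generate : measurable = <<s measurable_rects >>.
Proof.
apply/seteqP; split; last first.
  apply: smallest_sub; first exact: sigma_algebra_measurable.
  by move=> _ [A mA <-]; exact: measurable_tuple_rect.
change (g_sigma_preimage (fun i (t : n.-tuple T) => tnth t i) `<=`
  <<s measurable_rects >>).
apply: smallest_sub; first exact: smallest_sigma_algebra.
apply: (big_ind (fun U => U `<=` <<s measurable_rects >>)) => //.
  by move=> U V UG VG S [/UG|/VG].
move=> i _ _ [B mB <-]; apply: sub_sigma_algebra.
exists (fun j => if j == i then B else setT).
  by move=> j /=; case: ifP.
apply/seteqP; split => t /=.
- by move=> Bt; split => //; have := Bt i; rewrite eqxx.
- by move=> [_ Bt] j; case: eqP => [->|].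
Qed.

Lemma setI_closed_rects : setI_closed measurable_rects.
Proof.
move=> _ _ [A mA <-] [A' mA' <-].
exists (fun i => A i `&` A' i); first by move=> i; exact: measurableI.
by apply/seteqP; split => t /=; [move=> AA't; split=> i; case: (AA't i)|
  move=> [At A't] i; split].
Qed.

Lemma tuple_measure_unique (R : realType)
    (m1 m2 : {measure set (n.-tuple T) -> \bar R}) :
  (m1 setT < +oo)%E ->
  (forall A, (forall i, measurable (A i)) ->
     m1 (tuple_rect A) = m2 (tuple_rect A)) ->
  forall B, measurable B -> m1 B = m2 B.
Proof.
move=> m1_fin m12; apply: (measure_unique measurable_rects (fun=> setT)).
- exact: measurable_rects_generate.
- exact: setI_closed_rects.
- move=> _; exists (fun=> setT) => //.
  by apply/seteqP; split.
- by rewrite bigcup_const.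
- by move=> _ [A mA <-]; exact: m12.
- by [].
Qed.

End tuple_rect.

Section iid_subsample.
Context (R : realType) (d m n : nat) (D : probability (vec R d) R)
  (Dm : probability (sample R d m) R) (Dn : probability (sample R d n) R).
Hypotheses (Dm_iid : is_iid_law D Dm) (Dn_iid : is_iid_law D Dn).
Variable h : 'I_n -> 'I_m.
Hypothesis h_inj : injective h.

(* Coordinates outside the image of [h] are constrained by [setT], which
   contributes a factor [D setT = 1]. *)
Lemma subsample_preimage_rect A : (forall i, measurable (A i)) ->
  Dm (subsample h @^-1` tuple_rect A) = Dn (tuple_rect A).
Proof.
move=> mA; rewrite Dn_iid //.
pose A' j := if [pick i | h i == j] is Some i then A i else setT.
have -> : subsample h @^-1` tuple_rect A = tuple_rect A'.
  apply/seteqP; split => X /= AX.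
  - move=> j; rewrite /A'; case: pickP => [i /eqP <-|//].
    by have := AX i; rewrite tnth_mktuple.
  - move=> i; rewrite tnth_mktuple; have := AX (h i); rewrite /A'.
    case: pickP => [i' /eqP /h_inj -> //|/(_ i)].
    by rewrite eqxx.
rewrite Dm_iid; last by move=> j; rewrite /A'; case: pickP.
rewrite (partition_big h xpredT) //=; apply: eq_bigr => j _.
rewrite /A'; case: pickP => [i /eqP hij|h_notj].
- by rewrite (big_pred1 i) // => i' /=; rewrite -hij (inj_eq h_inj).
- by rewrite big_pred0 ?probability_setT // => i' /=; rewrite h_notj.
Qed.

Lemma distribution_subsample B : measurable B ->
  distribution Dm (subsample h) B = Dn B.
Proof.
apply: tuple_measure_unique; last exact: subsample_preimage_rect.
by move: (ltry (1 : R)); rewrite -(probability_setT (distribution Dm (subsample h))).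
Qed.

Lemma ge0_integral_subsample (F : sample R d n -> \bar R) :
  measurable_fun setT F -> (forall Y, 0 <= F Y)%E ->
  (\int[Dm]_X F (subsample h X) = \int[Dn]_Y F Y)%E.
Proof.
move=> mF F0; rewrite -ge0_integral_distribution //.
by apply: eq_measure_integral => B mB _; exact: distribution_subsample.
Qed.

End iid_subsample.

Lemma sorted_ltn_tupleE n m (t : n.-tuple 'I_m) :
  sorted ltn (map val t) =
  [forall i : 'I_n, forall j : 'I_n, (i < j)%N ==> (tnth t i < tnth t j)%N].
Proof.
rewrite sorted_pairwise; last exact: ltn_trans.
apply/(pairwiseP 0%N)/forallP => [t_lt i|t_lt i j].
- apply/forallP => j; apply/implyP => ij.
  move: (t_lt i j); rewrite size_map size_tuple.
  move=> /(_ (ltn_ord i) (ltn_ord j) ij).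
  by rewrite !(nth_map (tnth t i)) ?size_tuple // -!tnth_nth.
- rewrite size_map size_tuple => ni nj ij.
  have := implyP (forallP (t_lt (Ordinal ni)) (Ordinal nj)) ij.
  pose x0 := tnth t (Ordinal ni).
  by rewrite !(tnth_nth x0) !(nth_map x0) ?size_tuple.
Qed.

Lemma card_increasing d k :
  #|[pred f : {ffun 'I_d -> 'I_k} | increasing f]| = 'C(k, d).
Proof.
rewrite -card_ltn_sorted_tuples.
pose graph (f : {ffun 'I_d -> 'I_k}) : d.-tuple 'I_k := [tuple f i | i < d].
have graph_inj : injective graph.
  move=> f1 f2 f12; apply/ffunP => i.
  by have := congr1 (fun t => tnth t i) f12; rewrite /= !tnth_mktuple.
rewrite -(card_imset _ graph_inj); apply: eq_card => t.
rewrite inE sorted_ltn_tupleE; apply/imsetP/idP.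
- case=> f; rewrite inE => /forallP f_incr ->.
  apply/forallP => i; apply/forallP => j; rewrite !tnth_mktuple.
  exact: (forallP (f_incr i) j).
- move=> /forallP t_incr; exists [ffun i => tnth t i].
    rewrite inE; apply/forallP => i; apply/forallP => j; rewrite !ffunE.
    exact: (forallP (t_incr i) j).
  by apply: eq_from_tnth => i; rewrite tnth_mktuple ffunE.
Qed.

Lemma increasing_inj d k (f : {ffun 'I_d -> 'I_k}) : increasing f -> injective f.
Proof.
move=> /forallP f_incr i j fij; apply: val_inj => /=.
case: (ltngtP i j) => // ij.
- by move: (implyP (forallP (f_incr i) j) ij); rewrite fij ltnn.
- by move: (implyP (forallP (f_incr j) i) ij); rewrite fij ltnn.
Qed.

Section selection.
Context (R : realType) (d k : nat) (D : probability (vec R d) R)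
  (Dk : probability (sample R d k) R) (Dd : probability (sample R d d) R).
Hypotheses (Dk_iid : is_iid_law D Dk) (Dd_iid : is_iid_law D Dd).
Variable B : set (sample R d d).
Hypothesis mB : measurable B.

Definition sqr_det_indic (Y : sample R d d) : R := \det (datamx Y) ^+ 2 * \1_B Y.

Lemma sqr_det_indic_ge0 Y : 0 <= sqr_det_indic Y.
Proof. by rewrite mulr_ge0 ?sqr_ge0 // indicE ler0n. Qed.

Lemma measurable_sqr_det_indic : measurable_fun setT sqr_det_indic.
Proof.
apply: measurable_funM; last exact: measurable_indic.
by apply/measurable_funX/measurable_det => i j; exact: measurable_datamx.
Qed.

Definition selection_sum (X : sample R d k) : R :=
  \sum_(f : {ffun 'I_d -> 'I_k} | increasing f) \sum_(s : 'S_d)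
     d`!%:R^-1 * sqr_det_indic (subsample (f \o s) X).

(* When the Gram determinant vanishes so do all the minors [det X_S], hence
   the junk value [x / 0 = 0] in [select_prob] is harmless. *)
Lemma det_gram_mul_select_prob (X : sample R d k) :
  \det ((datamx X)^T *m datamx X) * select_prob X B = selection_sum X.
Proof.
rewrite /select_prob /selection_sum mulr_sumr; apply: eq_bigr => f _.
set g := \det _.
have det_sub (s : 'S_d) : \det (datamx (subsample (f \o s) X)) ^+ 2 =
    \det (submx_rows X f) ^+ 2.
  by rewrite datamx_subsample sqr_det_rowsub_perm submx_rowsE.
under [RHS]eq_bigr => s _ do rewrite /sqr_det_indic det_sub.
rewrite -!mulr_sumr; have [g0|g_neq0] := eqVneq g 0.
  by rewrite g0 mul0r submx_rowsE det_rowsub_eq0 // expr2 !mul0r mulr0.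
by rewrite mulrA [g * _]mulrC divfK // mulrCA.
Qed.

Lemma select_prob_ge0 (X : sample R d k) : 0 <= select_prob X B.
Proof.
apply: sumr_ge0 => f _; apply: mulr_ge0.
  by rewrite divr_ge0 ?sqr_ge0 ?det_gram_ge0.
rewrite mulr_ge0 ?invr_ge0 ?ler0n //.
by apply: sumr_ge0 => s _; rewrite indicE ler0n.
Qed.

Lemma measurable_select_prob :
  measurable_fun setT (fun X : sample R d k => select_prob X B).
Proof.
rewrite /select_prob; under eq_fun do rewrite big_mkcond /=.
apply: measurable_sum => f; case: (increasing f); last exact: measurable_cst.
apply: measurable_funM; first apply: measurable_funM.
- apply/measurable_funX/measurable_det => i j; under eq_fun do rewrite mxE.
  exact: measurable_datamx.
- exact: measurableT_comp (@measurable_inv R) (@measurable_det_gram R d k).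
apply: measurable_funM; first exact: measurable_cst.
apply: measurable_sum => s.
exact: measurableT_comp (measurable_indic mB) (measurable_subsample (f \o s)).
Qed.

Let measurable_perm_sum (f : 'I_d -> 'I_k) : measurable_fun setT
    (fun X => (\sum_(s : 'S_d) d`!%:R^-1 * sqr_det_indic (subsample (f \o s) X))%:E).
Proof.
apply/measurable_EFinP; apply: measurable_sum => s.
apply: measurable_funM; first exact: measurable_cst.
exact: measurableT_comp measurable_sqr_det_indic (measurable_subsample _).
Qed.

Lemma integral_perm_sum_subsample (f : 'I_d -> 'I_k) : injective f ->
  (\int[Dk]_X (\sum_(s : 'S_d) d`!%:R^-1 * sqr_det_indic (subsample (f \o s) X))%:E
   = \int[Dd]_Y (sqr_det_indic Y)%:E)%E.
Proof.
move=> f_inj; have fact_neq0 : d`!%:R != 0 :> R by rewrite pnatr_eq0 -lt0n fact_gt0.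
have mF : measurable_fun setT (fun Y => (sqr_det_indic Y)%:E).
  by apply/measurable_EFinP; exact: measurable_sqr_det_indic.
have F_ge0 Y : (0 <= (sqr_det_indic Y)%:E)%E by rewrite lee_fin sqr_det_indic_ge0.
under eq_integral do rewrite -sumEFin.
rewrite ge0_integral_sum //; first last.
- by move=> s X _; rewrite lee_fin mulr_ge0 ?invr_ge0 ?ler0n ?sqr_det_indic_ge0.
- move=> s; apply/measurable_EFinP/measurable_funM; first exact: measurable_cst.
  exact: measurableT_comp measurable_sqr_det_indic (measurable_subsample _).
transitivity (\sum_(s : 'S_d)
    ((d`!%:R^-1)%:E * \int[Dd]_Y (sqr_det_indic Y)%:E))%E.
  apply: eq_bigr => s _; under eq_integral do rewrite EFinM.
  rewrite ge0_integralZl_EFin ?invr_ge0 ?ler0n //; last first.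
    exact: measurableT_comp mF (measurable_subsample _).
  congr (_ * _)%E.
  have fs_inj : injective (f \o s) by exact: inj_comp f_inj (@perm_inj _ s).
  by rewrite -(ge0_integral_subsample Dk_iid Dd_iid fs_inj mF F_ge0).
rewrite -ge0_sume_distrl; last by move=> s _; rewrite lee_fin invr_ge0 ler0n.
by rewrite sumEFin sumr_const card_Sn -[d`!%:R^-1 *+ _]mulr_natr mulVf // mul1e.
Qed.

Lemma integral_selection_sum :
  (\int[Dk]_X (selection_sum X)%:E =
   'C(k, d)%:R%:E * \int[Dd]_Y (sqr_det_indic Y)%:E)%E.
Proof.
under eq_integral do rewrite /selection_sum -big_filter -sumEFin.
rewrite (ge0_integral_sum _ measurableT
  (fun f : {ffun 'I_d -> 'I_k} => measurable_perm_sum f)); last first.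
  by move=> f X _; rewrite lee_fin sumr_ge0 // => s _;
    rewrite mulr_ge0 ?invr_ge0 ?ler0n ?sqr_det_indic_ge0.
rewrite big_filter (eq_bigr (fun=> 1%:E * \int[Dd]_Y (sqr_det_indic Y)%:E)%E).
  rewrite -ge0_sume_distrl // sumEFin; congr (_%:E * _)%E.
  by rewrite (eq_bigl (mem [pred f | increasing f])) // sumr_const card_increasing.
by move=> f /increasing_inj f_inj; rewrite mul1e integral_perm_sum_subsample.
Qed.

End selection.

Theorem lemma6 (R : realType) (d k : nat) (D : probability (vec R d) R)
  (Dk : probability (sample R d k) R) (Dd : probability (sample R d d) R)
  (VSk : {measure set (sample R d k) -> \bar R}) :
  (d <= k)%N ->
  (\int[D]_x (\sum_(a < d) tnth x a ^+ 2)%:E < +oo)%E ->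
  second_moment D \in unitmx ->
  is_iid_law D Dk -> is_iid_law D Dd ->
  (forall A, measurable A -> VSk A = VS D Dk A) ->
  forall B : set (sample R d d), measurable B ->
    (\int[VSk]_X (select_prob X B)%:E)%E = VS D Dd B.
Proof.
move=> le_dk _ _ Dk_iid Dd_iid VSkE B mB.
set c := ((d`! * 'C(k, d))%:R * \det (second_moment D))^-1.
set c' := ((d`! * 'C(d, d))%:R * \det (second_moment D))^-1.
have c'E : c' = 'C(k, d)%:R * c.
  have C_neq0 : 'C(k, d)%:R != 0 :> R by rewrite pnatr_eq0 -lt0n bin_gt0.
  rewrite /c /c' binn muln1 natrM !invfM -!mulrA.
  by rewrite (mulrCA 'C(k, d)%:R) mulVKf.
have VSdE : VS D Dd B = (\int[Dd]_Y (sqr_det_indic B Y)%:E * c'%:E)%E.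
  rewrite /VS -/c'; congr (_ * _)%E; rewrite integral_mkcond.
  apply: eq_integral => Y _.
  by rewrite epatch_indic /= /sqr_det_indic EFinM det_mulmx det_tr -expr2.
rewrite (integral_scaled_density (fun X => det_gram_ge0 (datamx X))
  (@measurable_det_gram R d k) VSkE); first last.
- by apply/measurable_EFinP; exact: measurable_select_prob.
- by move=> X; rewrite lee_fin select_prob_ge0.
under eq_integral do rewrite -EFinM mulrC det_gram_mul_select_prob.
rewrite (integral_selection_sum Dk_iid Dd_iid mB) VSdE c'E EFinM.
by rewrite muleA (muleC (_%:E) (\int[Dd]_Y _)%E).
Qed.
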